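(* Let $X$ be a real Banach space, $h:X\to\mathbb R\cup\{+\infty\}$ proper and lower semicontinuous, and $\bar x$ a global minimizer of $h$. Let $p,q\in(1,+\infty)$ with $p^{-1}+q^{-1}=1$ and $\kappa>0$, and define $$Z:=\bigcup_{x\in X}\{\xi\in X^*:\ \xi\in\partial h(x)\ \text{and}\ \|x-\bar x\|\le\kappa\|\xi\|^{q/p}\}.$$ Then for every $\theta\in(0,1]$, $$h(x)\ge h(\bar x)+\frac12\Big(\frac{\theta}{2\kappa}\Big)^{p/q}\|x-\bar x\|^p\quad\text{for every }x\in\bar x+2\kappa\theta^{-1}J_p^{-1}(\overline Z),$$ where $\overline Z$ is the norm closure of $Z$ in $X^*$.
   Context: The (Fenchel–Moreau) subdifferential of $h$ at $x$ is $\partial h(x):=\{\xi\in X^*: x \text{ is a global minimizer on } X \text{ of } h-\langle\xi,\cdot\rangle\}$ (defined for possibly nonconvex $h$). For $p\in[1,\infty)$ the duality mapping is $J_p(x):=\{\xi\in X^*:\langle\xi,x\rangle=\|\xi\|\|x\|,\ \|\xi\|=\|x\|^{p-1}\}$, and for $A\subset X^*$, $J_p^{-1}(A):=\{x\in X: J_p(x)\cap A\neq\emptyset\}$. *)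

From HB Require Import structures.
From mathcomp Require Import all_boot all_order all_algebra.
From mathcomp Require Import all_classical all_reals all_analysis.
Set Implicit Arguments. Unset Strict Implicit. Unset Printing Implicit Defensive.
Import Order.TTheory GRing.Theory Num.Theory.
Import numFieldNormedType.Exports.
Local Open Scope classical_set_scope.
Local Open Scope ring_scope.

Section Dual.
Context {R : realType} {X : normedModType R}.

Definition is_dual (xi : X -> R) : Prop :=
  (forall (a : R) (x y : X), xi (a *: x + y) = a * xi x + xi y) /\ continuous xi.

Definition dnorm (xi : X -> R) : R :=
  sup [set `|xi x| | x in [set x : X | `|x| <= 1]].

Definition dclosure (Z : set (X -> R)) : set (X -> R) :=
  [set xi | is_dual xi /\
     forall e : R, 0 < e -> exists zeta, Z zeta /\ dnorm (fun x => xi x - zeta x) < e].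

Definition subdiff (h : X -> \bar R) (x : X) : set (X -> R) :=
  [set xi | is_dual xi /\
     forall y : X, (h x - (xi x)%:E <= h y - (xi y)%:E)%E].

Definition Jp (p : R) (x : X) : set (X -> R) :=
  [set xi | is_dual xi /\ xi x = dnorm xi * `|x| /\ dnorm xi = powR `|x| (p - 1)].

Definition Jp_inv (p : R) (A : set (X -> R)) : set X :=
  [set x | exists xi, Jp p x xi /\ A xi].

End Dual.

From HB Require Import structures.
From mathcomp Require Import all_boot all_order all_algebra.
From mathcomp Require Import all_classical all_reals all_analysis.
From mathcomp Require Import ring lra.
Import Order.TTheory GRing.Theory Num.Theory.
Import numFieldNormedType.Exports.
Set Implicit Arguments.
Unset Strict Implicit.
Unset Printing Implicit Defensive.
Local Open Scope classical_set_scope.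
Local Open Scope ring_scope.

(* For zeta in dh(x') with |x' - xb| <= kappa |zeta|^(q/p), minimality of x' for h - zeta and of
   xb for h give h(x) - h(xb) >= zeta(x - x') >= zeta(x - xb) - kappa |zeta|^q, using
   1 + q/p = q.  The right-hand side depends continuously on zeta in the dual norm, so the
   bound extends to the closure of Z.  For xi in J_p(y) and x = xb + c y it reads
   h(x) - h(xb) >= (c - kappa) |y|^p, and c = 2 kappa / theta >= 2 kappa makes this at least
   (c/2) |y|^p, which is the claimed bound. *)

Section RealLemmas.
Context {R : realType}.

Lemma powR_cvg_right (a s : R) : 0 <= a -> 0 < s ->
  powR (a + e) s @[e --> 0^'+] --> powR a s.
Proof.
rewrite le_eqVlt => /predU1P[<- s0|a0 _].
  rewrite powR0 ?gt_eqF //; under eq_fun do rewrite add0r; exact: powR_cvg0.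
have a_cont : {for a, continuous (fun x : R => powR x s)}.
  apply: differentiable_continuous; apply/derivable1_diffP.
  by apply: derivable_powR; rewrite in_itv /= a0.
have shift : (a + e) @[e --> 0] --> a.
  by rewrite -{2}(addr0 a); apply: cvgD; [exact: cvg_cst | exact: cvg_id].
exact: cvg_at_right_filter (cvg_comp _ _ shift a_cont).
Qed.

Lemma cvg_right0_leeDl (g : R -> R) (u w : \bar R) (l : R)
    (gl : g e @[e --> 0^'+] --> l)
    (ugw : forall e, 0 < e -> (u + (g e)%:E <= w)%E) :
  (u + l%:E <= w)%E.
Proof.
have ug1w := ugw 1 ltr01.
case: u ugw ug1w => [u| |] ugw ug1w; last by rewrite addNye leNye.
- case: w ugw ug1w => [w| |] ugw ug1w; [|by rewrite leey|by rewrite leeNy_eq in ug1w].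
  rewrite -EFinD lee_fin -lerBrDl.
  apply: (closed_cvg _ (closed_le (y := w - u)) _ _ gl).
  by near=> e; rewrite /= lerBrDl -lee_fin EFinD ugw.
- by move: ug1w; rewrite !addye // leye_eq => /eqP ->; rewrite leey.
Unshelve. all: by end_near. Qed.

Lemma conjugate_exponentsE (p q : R) (p0 : 0 < p) (q0 : 0 < q)
    (pq : p^-1 + q^-1 = 1) :
  [/\ p / q = p - 1, q / p + 1 = q & (p - 1) * q = p].
Proof.
have [pn0 qn0] := (lt0r_neq0 p0, lt0r_neq0 q0).
have sum : p + q = p * q.
  by have := congr1 (fun t => t * (p * q)) pq; rewrite mul1r => <-; field; exact/andP.
have pq_mul : (p - 1) * q = p by rewrite mulrBl mul1r -sum addrK.
split=> //; first by rewrite -{1}pq_mul mulfK.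
by rewrite -[1](divff pn0) -mulrDl addrC sum mulrAC divff // mul1r.
Qed.

Lemma powRV_mul_powRM (c r p : R) : 0 < c -> 0 <= r ->
  powR c^-1 (p - 1) * powR (c * r) p = c * powR r p.
Proof.
move=> c0 r0; rewrite powRM ?(ltW c0) // -(powR_inv1 (ltW c0)) -powRrM mulN1r.
have -> : powR c p = powR c (p - 1) * c.
  by rewrite -[in LHS](subrK 1 p) [LHS]powRD ?powRr1 ?(ltW c0) ?(lt0r_neq0 c0) ?implybT.
by rewrite powRN -mulrA mulKf // gt_eqF // powR_gt0.
Qed.

End RealLemmas.

Section DualFunctional.
Context {R : realType} {X : normedModType R}.
Implicit Types (xi zeta : X -> R) (u v : X).

Definition dual_linear {xi} (dxi : is_dual xi) : {linear X -> R^o} :=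
  HB.pack xi (GRing.isLinear.Build _ _ _ _ xi dxi.1).

Lemma dual0 xi (dxi : is_dual xi) : xi 0 = 0.
Proof. exact (linear0 (dual_linear dxi)). Qed.

Lemma dualB xi (dxi : is_dual xi) u v : xi (u - v) = xi u - xi v.
Proof. exact (linearB (dual_linear dxi) u v). Qed.

Lemma dualZ xi (dxi : is_dual xi) a v : xi (a *: v) = a * xi v.
Proof. exact (linearZZ (dual_linear dxi) a v). Qed.

Lemma dual_sub xi zeta : is_dual xi -> is_dual zeta ->
  is_dual (fun x => xi x - zeta x).
Proof.
move=> [xiD xiC] [zetaD zetaC]; split=> [a u v|x]; first by rewrite xiD zetaD; ring.
exact: cvgB (xiC x) (zetaC x).
Qed.

Lemma dual_bounded xi : is_dual xi ->
  exists2 M, 0 < M & forall v, `|xi v| <= M * `|v|.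
Proof.
move=> dxi; have /linear_boundedP/pinfty_ex_gt0[M M0 xiM] :
    bounded_near (dual_linear dxi) (nbhs (0 : X)).
  by apply: continuous_linear_bounded; exact: dxi.2.
by exists M.
Qed.

Lemma dnorm_has_ubound xi (dxi : is_dual xi) :
  has_ubound [set `|xi x| | x in [set x : X | `|x| <= 1]].
Proof.
have [M M0 xiM] := dual_bounded dxi; exists M => _ [x /= x1 <-].
by apply: (le_trans (xiM x)); rewrite ler_piMr // ltW.
Qed.

Lemma dnorm_ge0 xi (dxi : is_dual xi) : 0 <= dnorm xi.
Proof.
rewrite -(@normr0 _ R) -(dual0 dxi).
by apply: (ub_le_sup (dnorm_has_ubound dxi)); exists 0; rewrite //= normr0.
Qed.

Lemma dual_le_dnorm xi (dxi : is_dual xi) v : `|xi v| <= dnorm xi * `|v|.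
Proof.
have [->|v0] := eqVneq v 0; first by rewrite dual0 // !normr0 mulr0.
have nv : 0 < `|v| by rewrite normr_gt0.
have : `|xi (`|v|^-1 *: v)| <= dnorm xi.
  apply: (ub_le_sup (dnorm_has_ubound dxi)); exists (`|v|^-1 *: v) => //=.
  by rewrite normrZ normfV normr_id mulVf ?gt_eqF.
by rewrite dualZ // normrM normfV normr_id ler_pdivrMl // mulrC.
Qed.

Lemma dnorm_le xi M : (forall v, `|v| <= 1 -> `|xi v| <= M) -> dnorm xi <= M.
Proof.
move=> xiM; apply: ge_sup; first by exists `|xi 0|, 0 => //=; rewrite normr0.
by move=> _ [x /= x1 <-]; exact: xiM.
Qed.

Lemma dnorm_le_dist xi zeta (dxi : is_dual xi) (dzeta : is_dual zeta) :
  dnorm zeta <= dnorm xi + dnorm (fun x => xi x - zeta x).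
Proof.
apply: dnorm_le => v v1.
rewrite -[zeta v](subKr (xi v)); apply: (le_trans (ler_normB _ _)).
have dxz := dual_sub dxi dzeta.
by apply: lerD; [apply: le_trans (dual_le_dnorm dxi v) _ |
  apply: le_trans (dual_le_dnorm dxz v) _]; rewrite ler_piMr ?dnorm_ge0.
Qed.

Lemma Jp_apply (p : R) (y : X) xi : 0 < p -> Jp p y xi -> xi y = powR `|y| p.
Proof. by move=> p0 [_ [-> ->]]; rewrite mulrC mulr_powRB1. Qed.

Lemma Jp_dnorm_powR (p q : R) (y : X) xi :
  (p - 1) * q = p -> Jp p y xi -> powR (dnorm xi) q = powR `|y| p.
Proof. by move=> pq [_ [_ ->]]; rewrite -powRrM pq. Qed.

End DualFunctional.

Section SubdiffNearMinimizer.
Context {R : realType} {X : normedModType R}.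
Variables (h : X -> \bar R) (xb : X) (kappa s : R).
Hypothesis xb_min : forall x, (h xb <= h x)%E.
Hypothesis kappa_ge0 : 0 <= kappa.
Hypothesis s1_gt0 : 0 < s + 1.

Definition subdiff_near : set (X -> R) :=
  [set xi | exists x, subdiff h x xi /\ `|x - xb| <= kappa * powR (dnorm xi) s].

Lemma subdiff_minimizer_gap x xn zeta : subdiff h xn zeta ->
  (h xb + (zeta x - zeta xn)%:E <= h x)%E.
Proof.
move=> [_ zeta_min]; apply: le_trans (leeD2r _ (xb_min xn)) _.
rewrite EFinB addeCA addeC; apply: le_trans (leeD2r _ (zeta_min x)) _.
by rewrite subeK.
Qed.

Lemma subdiff_near_lower_bound x zeta : subdiff_near zeta ->
  (h xb + (zeta (x - xb) - kappa * powR (dnorm zeta) (s + 1))%:E <= h x)%E.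
Proof.
move=> [xn [zeta_sub xn_near]]; have dzeta := zeta_sub.1.
apply: le_trans _ (subdiff_minimizer_gap x zeta_sub); apply: leeD2l; rewrite lee_fin.
have : zeta (xn - xb) <= kappa * powR (dnorm zeta) (s + 1).
  rewrite -(mulr_powRB1 (dnorm_ge0 dzeta) s1_gt0) addrK mulrCA.
  apply: le_trans (ler_norm _) _; apply: le_trans (dual_le_dnorm dzeta _) _.
  by rewrite ler_wpM2l ?dnorm_ge0.
rewrite !dualB //; lra.
Qed.

Lemma dclosure_subdiff_near_lower_bound x xi : dclosure subdiff_near xi ->
  (h xb + (xi (x - xb) - kappa * powR (dnorm xi) (s + 1))%:E <= h x)%E.
Proof.
move=> [dxi xi_near]; set v := x - xb.
(* the bound provided by any zeta in subdiff_near with dnorm (xi - zeta) < e *)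
pose g e := xi v - e * `|v| - kappa * powR (dnorm xi + e) (s + 1).
apply: (cvg_right0_leeDl (g := g)) => [|e e0].
  have : g e @[e --> 0^'+] --> xi v - 0 * `|v| - kappa * powR (dnorm xi) (s + 1).
    apply: cvgB; [apply: cvgB; [exact: cvg_cst|]|apply: cvgM; [exact: cvg_cst|]].
    + by apply: cvgM; [exact: cvg_at_right_filter cvg_id | exact: cvg_cst].
    + exact: powR_cvg_right (dnorm_ge0 dxi) s1_gt0.
  by rewrite mul0r subr0.
have [zeta [zeta_near xi_zeta]] := xi_near e e0.
have [xn [[dzeta _] _]] := zeta_near.
apply: le_trans _ (subdiff_near_lower_bound x zeta_near); apply: leeD2l.
rewrite lee_fin /g.
have xi_zeta_v : xi v - zeta v <= e * `|v|.
  apply: le_trans (ler_norm _) _.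
  apply: le_trans (dual_le_dnorm (dual_sub dxi dzeta) v) _.
  by rewrite ler_wpM2r // ltW.
have : kappa * powR (dnorm zeta) (s + 1) <= kappa * powR (dnorm xi + e) (s + 1).
  rewrite ler_wpM2l //; apply: (ge0_ler_powR (ltW s1_gt0));
    rewrite ?nnegrE ?addr_ge0 ?dnorm_ge0 ?(ltW e0) //.
  by apply: le_trans (dnorm_le_dist dxi dzeta) _; rewrite lerD2l ltW.
lra.
Qed.

End SubdiffNearMinimizer.

Theorem lemma2p2 (R : realType) (X : completeNormedModType R)
  (h : X -> \bar R) (xb : X) (p q kappa : R) :
  (forall x, h x <> -oo%E) -> (exists x, h x <> +oo%E) ->
  lower_semicontinuous h ->
  (forall x, (h xb <= h x)%E) ->
  1 < p -> 1 < q -> p^-1 + q^-1 = 1 -> 0 < kappa ->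
  let Z := [set xi : X -> R | exists x : X,
              subdiff h x xi /\ `|x - xb| <= kappa * powR (dnorm xi) (q / p)] in
  forall theta : R, 0 < theta -> theta <= 1 ->
  forall x : X,
    (exists y : X, Jp_inv p (dclosure Z) y /\ x = xb + (2 * kappa / theta) *: y) ->
    (h xb + (2^-1 * powR (theta / (2 * kappa)) (p / q) * powR `|x - xb| p)%:E <= h x)%E.
Proof.
move=> _ _ _ xb_min p1 q1 pq k0 Z th th0 th1 _ [y [[xi [Jxi Zxi]] ->]].
have [p0 q0] := (lt_trans ltr01 p1, lt_trans ltr01 q1).
have [pq_exp qp_exp pq_mul] := conjugate_exponentsE p0 q0 pq.
set c := 2 * kappa / th.
have c0 : 0 < c by rewrite divr_gt0 ?mulr_gt0.
have qp1_gt0 : 0 < q / p + 1 by rewrite qp_exp.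
have := dclosure_subdiff_near_lower_bound xb_min (ltW k0) qp1_gt0 (xb + c *: y) Zxi.
rewrite addrAC subrr add0r qp_exp (dualZ Jxi.1) (Jp_apply p0 Jxi) (Jp_dnorm_powR pq_mul Jxi).
apply: le_trans; apply: leeD2l; rewrite lee_fin.
rewrite normrZ gtr0_norm // -invf_div pq_exp -mulrA powRV_mul_powRM //.
have kappa_le : 0 <= c / 2 - kappa.
  have -> : c / 2 = kappa / th by rewrite /c; field; exact: lt0r_neq0.
  by rewrite subr_ge0 ler_pdivlMr // ler_piMr // ltW.
have := mulr_ge0 kappa_le (powR_ge0 `|y| p); rewrite -/c; lra.
Qed.
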